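(* Let $L:\mathbb{R}^n\to\mathbb{R}$ be $\mathcal{C}^1$, convex, with a unique minimizer $z_1^*$ ($L^*=L(z_1^* )$), and with $\nabla L$ Lipschitz with constant $M>0$. Let $\zeta>0$, $\bar d(t)=\frac{3}{2(t+2)}$, $\bar\beta(t)=\frac{t-1}{t+2}$. Then for every $\varepsilon>0$ and every compact set $K\subset\mathbb{R}^{2n}$ there exists $t^*>0$ such that every maximal solution $t\mapsto(z(t),\tau(t))$ of $\dot z_1=z_2$, $\dot z_2=-2\bar d(\tau)z_2-\frac{\zeta^2}{M}\nabla L(z_1+\bar\beta(\tau)z_2)$, $\dot\tau=1$ on $\mathbb{R}^{2n}\times\mathbb{R}_{\ge0}$ with $(z(0),\tau(0))\in K\times\{0\}$ satisfies $$\frac{\zeta^2}{M}(L(z_1(t))-L^* )\le\varepsilon\quad\text{for all }t\ge t^*.$$ *)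

From HB Require Import structures.
From mathcomp Require Import all_boot all_order all_algebra.
From mathcomp Require Import all_classical all_reals all_analysis.
Set Implicit Arguments. Unset Strict Implicit. Unset Printing Implicit Defensive.
Import Order.TTheory GRing.Theory Num.Theory.
Import numFieldNormedType.Exports.
Local Open Scope classical_set_scope.
Local Open Scope ring_scope.

Definition dotv {R : realType} {n : nat} (u v : 'rV[R]_n) : R :=
  \sum_(i < n) u ord0 i * v ord0 i.

(* Euclidean norm on R^n (MathComp's default norm on matrices is the sup norm). *)
Definition enorm {R : realType} {n : nat} (u : 'rV[R]_n) : R :=
  Num.sqrt (dotv u u).

Definition is_gradient {R : realType} {n : nat}
  (L : 'rV[R]_n -> R) (g : 'rV[R]_n -> 'rV[R]_n) : Prop :=
  forall x, differentiable L x /\ forall h, 'd L x h = dotv (g x) h.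

Definition convex_fun {R : realType} {n : nat} (L : 'rV[R]_n -> R) : Prop :=
  forall (x y : 'rV[R]_n) (l : R), 0 <= l <= 1 ->
    L (l *: x + (1 - l) *: y) <= l * L x + (1 - l) * L y.

Definition unique_minimizer {R : realType} {n : nat}
  (L : 'rV[R]_n -> R) (zs : 'rV[R]_n) : Prop :=
  (forall x, L zs <= L x) /\ (forall y, (forall x, L y <= L x) -> y = zs).

Definition lipschitz_euclid {R : realType} {n : nat}
  (g : 'rV[R]_n -> 'rV[R]_n) (M : R) : Prop :=
  forall x y, enorm (g x - g y) <= M * enorm (x - y).

Definition dbar {R : realType} (t : R) : R := 3 / (2 * (t + 2)).
Definition betabar {R : realType} (t : R) : R := (t - 1) / (t + 2).

Definition is_sol {R : realType} {n : nat} (gradL : 'rV[R]_n -> 'rV[R]_n)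
  (zeta M : R) (T : \bar R)
  (z1 z2 : R -> 'rV[R]_n) (tau : R -> R) : Prop :=
  (0 < T)%E /\
  (forall t, 0 <= t -> (t%:E < T)%E -> 0 <= tau t) /\
  (* right-continuity at the initial time 0 (continuity on (0,T) follows
     from differentiability there) *)
  [/\ z1 s @[s --> 0^'+] --> z1 0, z2 s @[s --> 0^'+] --> z2 0
     & tau s @[s --> 0^'+] --> tau 0] /\
  (forall t, 0 < t -> (t%:E < T)%E ->
     [/\ is_derive t 1 z1 (z2 t),
         is_derive t 1 z2
           (- (2 * dbar (tau t)) *: z2 t
            - (zeta ^+ 2 / M) *: gradL (z1 t + betabar (tau t) *: z2 t))
       & is_derive t 1 tau 1]).

Definition is_maximal_sol {R : realType} {n : nat} (gradL : 'rV[R]_n -> 'rV[R]_n)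
  (zeta M : R) (T : \bar R)
  (z1 z2 : R -> 'rV[R]_n) (tau : R -> R) : Prop :=
  is_sol gradL zeta M T z1 z2 tau /\
  forall (T' : \bar R) (w1 w2 : R -> 'rV[R]_n) (s : R -> R),
    is_sol gradL zeta M T' w1 w2 s ->
    (forall t, 0 <= t -> (t%:E < T)%E ->
        [/\ w1 t = z1 t, w2 t = z2 t & s t = tau t]) ->
    (T' <= T)%E.

From HB Require Import structures.
From mathcomp Require Import all_boot all_order all_algebra.
From mathcomp Require Import all_classical all_reals all_analysis.
From mathcomp Require Import lra ring.
Import Order.TTheory GRing.Theory Num.Theory.
Import numFieldNormedType.Exports.
Local Open Scope classical_set_scope.
Local Open Scope ring_scope.

(* On [0, 1] the vector field grows at most linearly in the state, uniformly in
   time, so Gronwall's lemma bounds the energy |z1 - zs|^2 + |z2|^2 at time 1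
   in terms of the initial data.  For t >= 1 we have betabar(t) > 0, and
   convexity of L alone makes the Lyapunov function
     E(t) = c (t+2)^2 (L(z1) - L(zs)) / 4 + |z1 - zs + (t+2)/2 z2|^2 / 2,
   c = zeta^2/M, nonincreasing.  Hence c (L(z1 t) - L(zs)) <= 4 E(1) / (t+2)^2,
   and E(1) is bounded over the compact set of initial conditions. *)

Local Notation sqn u := (dotv u u).

Section dotv_theory.
Context {R : realType} {n : nat}.
Implicit Types u v w : 'rV[R]_n.

Lemma dotvC u v : dotv u v = dotv v u.
Proof. by apply: eq_bigr => i _; rewrite mulrC. Qed.

Lemma dotvDl u v w : dotv (u + v) w = dotv u w + dotv v w.
Proof. by rewrite /dotv -big_split; apply: eq_bigr => i _; rewrite mxE mulrDl. Qed.

Lemma dotvDr u v w : dotv w (u + v) = dotv w u + dotv w v.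
Proof. by rewrite dotvC dotvDl !(dotvC w). Qed.

Lemma dotvZl (a : R) u v : dotv (a *: u) v = a * dotv u v.
Proof. by rewrite /dotv mulr_sumr; apply: eq_bigr => i _; rewrite mxE mulrA. Qed.

Lemma dotvZr (a : R) u v : dotv u (a *: v) = a * dotv u v.
Proof. by rewrite dotvC dotvZl dotvC. Qed.

Lemma dotvNl u v : dotv (- u) v = - dotv u v.
Proof. by rewrite -scaleN1r dotvZl mulN1r. Qed.

Lemma dotvNr u v : dotv u (- v) = - dotv u v.
Proof. by rewrite dotvC dotvNl dotvC. Qed.

Lemma dotvBl u v w : dotv (u - v) w = dotv u w - dotv v w.
Proof. by rewrite dotvDl dotvNl. Qed.

Lemma dotvBr u v w : dotv w (u - v) = dotv w u - dotv w v.
Proof. by rewrite dotvDr dotvNr. Qed.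

Lemma dotv_ge0 u : 0 <= sqn u.
Proof. by apply: sumr_ge0 => i _; rewrite -expr2 sqr_ge0. Qed.

Lemma dotv_AMGM u v : 2 * dotv u v <= sqn u + sqn v.
Proof. by have := dotv_ge0 (u - v); rewrite dotvBl !dotvBr (dotvC v u); lra. Qed.

Lemma dotvD_le u v : sqn (u + v) <= 2 * sqn u + 2 * sqn v.
Proof. by have := dotv_AMGM u v; rewrite dotvDl !dotvDr (dotvC v u); lra. Qed.

Lemma lipschitz_euclid_sqr {g : 'rV[R]_n -> 'rV[R]_n} {M : R} :
  lipschitz_euclid g M -> forall u v, sqn (g u - g v) <= M ^+ 2 * sqn (u - v).
Proof.
move=> hlip u v; have h := hlip u v; rewrite /enorm in h.
have := ler_pM (sqrtr_ge0 _) (sqrtr_ge0 _) h h.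
by rewrite -!expr2 exprMn !sqr_sqrtr ?dotv_ge0.
Qed.

Lemma lipschitz_euclid_sqr_growth {g : 'rV[R]_n -> 'rV[R]_n} {M : R} :
  lipschitz_euclid g M ->
  forall u v, sqn (g u) <= 2 * M ^+ 2 * sqn (u - v) + 2 * sqn (g v).
Proof.
move=> hlip u v; have := dotvD_le (g u - g v) (g v); rewrite subrK.
have := lipschitz_euclid_sqr hlip u v; lra.
Qed.

End dotv_theory.

Section convex_gradient.
Context {R : realType} {n : nat} {L : 'rV[R]_n -> R} {g : 'rV[R]_n -> 'rV[R]_n}.
Hypotheses (hgrad : is_gradient L g) (hconv : convex_fun L).

(* The one-sided difference quotients of L along y - x are bounded by
   L y - L x by convexity, and converge to the directional derivative. *)
Lemma convex_gradient_le x y : L x + dotv (g x) (y - x) <= L y.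
Proof.
set h := y - x.
have [dL dLe] := hgrad x.
have E : 'D_h L x = dotv (g x) h by rewrite deriveE // dLe.
have lim0 : (fun l : R => l^-1 *: (L (l *: h + x) - L x)) @ 0^' --> dotv (g x) h.
  by rewrite -E; exact: diff_derivable.
have limr : (fun l : R => l^-1 *: (L (l *: h + x) - L x)) @ 0^'+ --> dotv (g x) h.
  apply: cvg_trans lim0 => A [e /= e0 HA]; exists e => // z ze z0.
  by apply: HA => //; rewrite gt_eqF.
rewrite -lerBrDl; apply: (cvgr_to_le limr).
near=> l.
have l0 : 0 < l by near: l; exact: nbhs_right_gt.
have l1 : l < 1 by near: l; exact: nbhs_right_lt.
have := @hconv y x l ltac:(by rewrite !ltW).
have -> : l *: y + (1 - l) *: x = l *: h + x.
  by rewrite /h scalerBr scalerBl scale1r addrCA addrC.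
move=> H; rewrite /GRing.scale /= -(ler_pM2l l0) mulrA mulrV ?unitfE ?gt_eqF // mul1r.
lra.
Unshelve. all: by end_near.
Qed.

Lemma convex_gradient_monotone x y : 0 <= dotv (g x - g y) (x - y).
Proof.
have := convex_gradient_le x y; have := convex_gradient_le y x.
rewrite -[y - x]opprB dotvNr dotvBl; lra.
Qed.

End convex_gradient.

Section real_analysis.
Context {R : realType}.

Lemma is_derive_dotv {n : nat} {f h : R -> 'rV[R]_n} {t : R} {Df Dh : 'rV[R]_n} :
  is_derive t 1 f Df -> is_derive t 1 h Dh ->
  is_derive t (1 : R) (fun s => dotv (f s) (h s)) (dotv Df (h t) + dotv (f t) Dh).
Proof.
have coord (u : R -> 'rV[R]_n) D i :
    is_derive t 1 u D -> is_derive t (1 : R) (fun s => u s ord0 i) (D ord0 i).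
  case=> du <-; apply: DeriveDef; first by move/derivable_mxP: du; apply.
  by rewrite derive_mx // mxE.
move=> df dh.
have -> : (fun s => dotv (f s) (h s)) = \sum_(i < n) (fun s => f s ord0 i * h s ord0 i).
  by apply/funext => s; rewrite /dotv fct_sumE.
have -> : dotv Df (h t) + dotv (f t) Dh =
    \sum_(i < n) (f t ord0 i *: Dh ord0 i + h t ord0 i *: Df ord0 i).
  rewrite /dotv -big_split /=; apply: eq_bigr => i _.
  by rewrite /GRing.scale /= addrC [Df _ _ * _]mulrC.
apply: is_derive_sum => i; exact: is_deriveM (coord _ _ _ df) (coord _ _ _ dh).
Qed.

Lemma is_derive_subr_cst {V W : normedModType R} {f : V -> W} {x v : V} {df : W}
    (w : W) :
  is_derive x v f df -> is_derive x v (fun s => f s - w) df.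
Proof.
by move=> d; apply: is_derive_eq (is_deriveB d (is_derive_cst w x v)) _; rewrite subr0.
Qed.

Lemma is_derive_comp_gradient {n : nat} {L : 'rV[R]_n -> R} {g : 'rV[R]_n -> 'rV[R]_n}
    {x : R -> 'rV[R]_n} {t : R} {D : 'rV[R]_n} :
  is_gradient L g -> is_derive t 1 x D ->
  is_derive t (1 : R) (fun s => L (x s)) (dotv (g (x t)) D).
Proof.
move=> hgrad [dx <-].
have dx' : differentiable x t by apply/derivable1_diffP.
have [dL dLe] := hgrad (x t).
have dc : differentiable (L \o x) t by exact: differentiable_comp.
apply: DeriveDef; first exact: diff_derivable.
by rewrite (deriveE _ dc) diff_comp //= -dLe deriveE.
Qed.

Lemma cvg_dotv {n : nat} {T : Type} (F : set_system T) {FF : Filter F}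
    (f h : T -> 'rV[R]_n) a b :
  f @ F --> a -> h @ F --> b -> (fun x => dotv (f x) (h x)) @ F --> dotv a b.
Proof.
move=> fa hb; apply: cvg_big => //; first exact: add_continuous.
move=> i _; apply: cvgM.
- exact: (continuous_cvg _ (@coord_continuous R 1 n ord0 i a) fa).
- exact: (continuous_cvg _ (@coord_continuous R 1 n ord0 i b) hb).
Qed.

Lemma is_derive_le0_le {f Df : R -> R} {a b : R} : a < b ->
  f x @[x --> a^'+] --> f a ->
  (forall x, a < x <= b -> is_derive x 1 f (Df x)) ->
  (forall x, a < x < b -> Df x <= 0) -> f b <= f a.
Proof.
move=> ab fa df dle.
have cont x : a < x <= b -> {for x, continuous f}.
  by move=> /df [dx _]; exact/differentiable_continuous/derivable1_diffP.
apply: (@ler0_derive1_le_cc R f a b).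
- move=> x; rewrite in_itv /= => /andP[ax xb].
  by have [] : is_derive x 1 f (Df x) by apply: df; rewrite ax ltW.
- move=> x; rewrite in_itv /= => /andP[ax xb].
  have [_ dfx] : is_derive x 1 f (Df x) by apply: df; rewrite ax ltW.
  by rewrite derive1E dfx; apply: dle; rewrite ax.
- apply/continuous_within_itvP => //; split => //.
  + by move=> x; rewrite in_itv /= => /andP[ax xb]; apply: cont; rewrite ax ltW.
  + by apply: cvg_at_left_filter; apply: cont; rewrite ab lexx.
- by rewrite in_itv /= lexx ltW.
- by rewrite in_itv /= lexx ltW.
- exact: ltW.
Qed.

Lemma is_derive_gronwall (f Df : R -> R) (k a b : R) : a < b ->
  f x @[x --> a^'+] --> f a ->
  (forall x, a < x <= b -> is_derive x 1 f (Df x)) ->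
  (forall x, a < x < b -> Df x <= k * f x) -> f b <= f a * expR (k * (b - a)).
Proof.
move=> ab fa df dle.
pose e x := expR (- k * x).
have de x : is_derive x (1 : R) e (e x * - k).
  have dlin : is_derive x (1 : R) (fun s => - k * s) (- k).
    by apply: is_derive_eq (is_deriveZ (- k) (is_derive_id x 1)) _; rewrite scaler1.
  exact: is_derive1_comp (is_derive_expR _) dlin.
have dfe x : a < x <= b ->
    is_derive x (1 : R) (fun s => f s * e s) (f x * (e x * - k) + e x * Df x).
  by move=> /df dfx; exact: is_deriveM dfx (de x).
have fe_a : (fun s => f s * e s) x @[x --> a^'+] --> f a * e a.
  apply: cvgM fa _; apply: cvg_at_right_filter; apply: continuous_cvg.
    exact: continuous_expR.
  by apply: cvgM; [exact: cvg_cst | exact: cvg_id].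
have dfe_le0 x : a < x < b -> f x * (e x * - k) + e x * Df x <= 0.
  move=> /dle dfx; have := expR_gt0 (- k * x); rewrite -/(e x) => ex0.
  have -> : f x * (e x * - k) + e x * Df x = e x * (Df x - k * f x) by ring.
  by rewrite pmulr_rle0 // subr_le0.
have := is_derive_le0_le ab fe_a dfe dfe_le0; rewrite /e => fe_le.
rewrite -(ler_pM2r (expR_gt0 (- k * b))) -mulrA -expRD.
by have -> : k * (b - a) + - k * b = - k * a by ring.
Qed.

Lemma is_derive1_eq_id (tau : R -> R) (T : \bar R) : tau 0 = 0 ->
  tau s @[s --> 0^'+] --> tau 0 ->
  (forall t, 0 < t -> (t%:E < T)%E -> is_derive t 1 tau 1) ->
  forall t, 0 <= t -> (t%:E < T)%E -> tau t = t.
Proof.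
move=> tau0 tau_cvg dtau t; rewrite le_eqVlt => /predU1P[<- //|t0] tT.
have d x : 0 < x <= t -> is_derive x (1 : R) (fun s => tau s - s) 0.
  move=> /andP[x0 xt]; rewrite -(subrr (1 : R)).
  apply: is_deriveB (dtau x x0 _) (is_derive_id x 1).
  by apply: le_lt_trans tT; rewrite lee_fin.
have dN x : 0 < x <= t -> is_derive x (1 : R) (fun s => - (tau s - s)) 0.
  by move=> /d dx; rewrite -oppr0; exact: is_deriveN dx.
have lim : (fun s => tau s - s) s @[s --> 0^'+] --> tau 0 - 0.
  by apply: cvgB tau_cvg _; exact: cvg_at_right_filter.
have le1 := is_derive_le0_le t0 lim d (fun _ _ => lexx 0).
have limN : (fun s => - (tau s - s)) s @[s --> 0^'+] --> - (tau 0 - 0).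
  exact: cvgN.
have le2 := is_derive_le0_le t0 limN dN (fun _ _ => lexx 0).
by move: le1 le2 => /=; rewrite tau0; lra.
Qed.

Lemma compact_continuous_ub {T : topologicalType} {K : set T} {f : T -> R} :
  compact K -> continuous f -> exists B, forall p, K p -> f p <= B.
Proof.
move=> cK cf.
have := compact_bounded (continuous_compact (continuous_subspaceT cf) cK).
move=> /pinfty_ex_gt0 [B _ HB]; exists B => p Kp.
have /(_ (ex_intro2 _ _ p Kp erefl)) := HB (f p).
exact/le_trans/ler_norm.
Qed.

End real_analysis.

Section nesterov_flow.
Context {R : realType} {n : nat} {L : 'rV[R]_n -> R} {gradL : 'rV[R]_n -> 'rV[R]_n}
  (zs : 'rV[R]_n) {M zeta : R}.
Hypotheses (hgrad : is_gradient L gradL) (hconv : convex_fun L)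
  (hM : 0 < M) (hlip : lipschitz_euclid gradL M) (hzeta : 0 < zeta).

Let c := zeta ^+ 2 / M.

Let c_gt0 : 0 < c. Proof. by rewrite divr_gt0 // exprn_gt0. Qed.

Definition nesterov_field (t : R) (a b : 'rV[R]_n) : 'rV[R]_n :=
  - (2 * dbar t) *: b - c *: gradL (a + betabar t *: b).

Lemma sol_is_derive {T : \bar R} {z1 z2 : R -> 'rV[R]_n} {tau : R -> R} :
  is_sol gradL zeta M T z1 z2 tau -> tau 0 = 0 ->
  forall t, 0 < t -> (t%:E < T)%E ->
  is_derive t 1 z1 (z2 t) /\ is_derive t 1 z2 (nesterov_field t (z1 t) (z2 t)).
Proof.
case=> _ [_ [[_ _ tau_cvg] der]] tau0 t t0 tT.
have tau_t : tau t = t.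
  apply: (is_derive1_eq_id _ T tau0 tau_cvg _ t (ltW t0) tT) => s s0 sT.
  by case: (der s s0 sT).
by case: (der t t0 tT); rewrite tau_t.
Qed.

Let grow_rate := 1 + c + 4 * c * M ^+ 2.
Let grow_shift := 2 * c * sqn (gradL zs).

Let grow_shift_ge0 : 0 <= grow_shift.
Proof. exact: mulr_ge0 (mulr_ge0 (ler0n _ 2) (ltW c_gt0)) (dotv_ge0 _). Qed.

Lemma nesterov_energy_growth (x : R) (a b : 'rV[R]_n) : 0 <= x <= 1 ->
  2 * dotv (a - zs) b + 2 * dotv b (nesterov_field x a b)
    <= grow_rate * (sqn (a - zs) + sqn b + grow_shift).
Proof.
move=> /andP[x0 x1].
set u := a - zs; set G := gradL (a + betabar x *: b).
have c0 := ltW c_gt0.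
have dbar_ge0 : 0 <= dbar x by rewrite /dbar divr_ge0 // mulr_ge0 // addr_ge0.
have betabar_sqr : betabar x ^+ 2 <= 1.
  have x2 : 0 < x + 2 by lra.
  have : -1 <= betabar x <= 1 by rewrite /betabar ler_pdivlMr ?ler_pdivrMr //; lra.
  by move=> /andP[? ?]; nra.
have G_le : sqn G <= 4 * M ^+ 2 * (sqn u + sqn b) + 2 * sqn (gradL zs).
  have bb : betabar x * (betabar x * sqn b) <= sqn b.
    by rewrite mulrA -expr2 ler_piMl // dotv_ge0.
  have ub : sqn (u + betabar x *: b) <= 2 * sqn u + 2 * sqn b.
    by have := dotvD_le u (betabar x *: b); rewrite dotvZl dotvZr; lra.
  have := lipschitz_euclid_sqr_growth hlip (a + betabar x *: b) zs.
  rewrite -/G addrAC -/u; have := ler_wpM2l (sqr_ge0 M) ub; lra.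
have ub := dotv_AMGM u b.
have bG : - (2 * dotv b G) <= sqn b + sqn G.
  by have := dotv_AMGM b (- G); rewrite dotvNr dotvNl dotvNr opprK; lra.
have := ler_wpM2l c0 bG; have := ler_wpM2l c0 G_le.
have := mulr_ge0 dbar_ge0 (dotv_ge0 b); have := mulr_ge0 c0 (dotv_ge0 u).
have cM_ge0 := mulr_ge0 (mulr_ge0 (ler0n _ 4) c0) (sqr_ge0 M).
have := mulr_ge0 (addr_ge0 c0 cM_ge0) grow_shift_ge0.
rewrite /nesterov_field -/G (dotvBr (_ *: b) (c *: G)) !dotvZr /grow_rate /grow_shift.
lra.
Qed.

Lemma nesterov_energy_at_one {T : \bar R} {z1 z2 : R -> 'rV[R]_n} {tau : R -> R} :
  is_sol gradL zeta M T z1 z2 tau -> tau 0 = 0 -> (1%:E < T)%E ->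
  sqn (z1 1 - zs) + sqn (z2 1) + grow_shift
    <= (sqn (z1 0 - zs) + sqn (z2 0) + grow_shift) * expR grow_rate.
Proof.
move=> sol tau0 T1; have [_ [_ [[z1_cvg z2_cvg _] _]]] := sol.
pose H s := sqn (z1 s - zs) + sqn (z2 s) + grow_shift.
pose dH s :=
  2 * dotv (z1 s - zs) (z2 s) + 2 * dotv (z2 s) (nesterov_field s (z1 s) (z2 s)).
have := @is_derive_gronwall R H dH grow_rate 0 1 ltr01; rewrite subr0 mulr1; apply.
- have u_cvg : (z1 s - zs) @[s --> 0^'+] --> z1 0 - zs by apply: cvgB z1_cvg (cvg_cst _).
  by apply: cvgD (cvg_cst _); apply: cvgD; apply: cvg_dotv.
- move=> x /andP[x0 x1].
  have [d1 d2] := sol_is_derive sol tau0 x x0 (le_lt_trans (lee_tofin x1) T1).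
  have du := is_derive_subr_cst zs d1.
  apply: is_derive_eq (is_deriveD (is_deriveD (is_derive_dotv du du)
    (is_derive_dotv d2 d2)) (is_derive_cst grow_shift x 1)) _.
  rewrite /dH addr0 [dotv (z2 x) (z1 x - zs)]dotvC.
  by rewrite [dotv (nesterov_field _ _ _) _]dotvC; ring.
- by move=> x /andP[x0 x1]; apply: nesterov_energy_growth; rewrite !ltW.
Qed.

Definition nesterov_lyapunov (s : R) (a b : 'rV[R]_n) : R :=
  c / 4 * (s + 2) ^+ 2 * (L a - L zs) + sqn (a - zs + (s + 2) / 2 *: b) / 2.

Definition nesterov_dissipation (s : R) (a b : 'rV[R]_n) : R :=
  L a - L zs + (s + 2) / 2 * dotv (gradL a) b
  - dotv (a - zs + (s + 2) / 2 *: b) (gradL (a + betabar s *: b)).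

Lemma nesterov_lyapunov_ge s a b :
  c / 4 * (s + 2) ^+ 2 * (L a - L zs) <= nesterov_lyapunov s a b.
Proof. by rewrite lerDl divr_ge0 ?dotv_ge0. Qed.

Lemma nesterov_lyapunov_one_le a b :
  nesterov_lyapunov 1 a b <=
    (9 / 4 * c * M ^+ 2 + 9 / 8 * c + 9 / 4) * (sqn (a - zs) + sqn b)
    + 9 / 4 * c * sqn (gradL zs).
Proof.
set u := a - zs.
have La : L a - L zs <= (M ^+ 2 + 1 / 2) * sqn u + sqn (gradL zs).
  have := convex_gradient_le hgrad hconv a zs; rewrite -[zs - a]opprB -/u dotvNr.
  have := dotv_AMGM (gradL a) u; have := lipschitz_euclid_sqr_growth hlip a zs; lra.
have := ler_wpM2l (ltW c_gt0) La.
have := dotvD_le u ((1 + 2) / 2 *: b); rewrite dotvZl dotvZr.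
have c0 := ltW c_gt0; have := dotv_ge0 u.
have := mulr_ge0 c0 (dotv_ge0 b).
have := mulr_ge0 (mulr_ge0 c0 (sqr_ge0 M)) (dotv_ge0 b).
rewrite /nesterov_lyapunov -/u; lra.
Qed.

Lemma nesterov_dissipation_le0 x a b : 1 < x -> nesterov_dissipation x a b <= 0.
Proof.
move=> x1; have x2 : 0 < x + 2 by lra.
rewrite /nesterov_dissipation.
set bt := betabar x; set y := a + bt *: b; set G := gradL y.
have bt_gt0 : 0 < bt by rewrite /bt /betabar divr_gt0 //; lra.
have bt_le1 : bt <= 1 by rewrite /bt /betabar ler_pdivrMr //; lra.
have := convex_gradient_le hgrad hconv y zs.
rewrite -[zs - y]opprB /y addrAC dotvNr dotvDr dotvZr -/y -/G => i1.
have := convex_gradient_le hgrad hconv a y.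
rewrite /y addrAC subrr add0r dotvZr -/y => i2.
have := convex_gradient_monotone hgrad hconv a y.
rewrite -[a - y]opprB /y addrAC subrr add0r dotvNr dotvZr dotvBl -/y -/G => i3.
have mono : dotv (gradL a) b - dotv G b <= 0.
  by rewrite -(pmulr_rle0 _ bt_gt0); lra.
have gap : 0 <= (x + 2) / 2 - bt by lra.
have := mulr_ge0_le0 gap mono.
rewrite dotvDl dotvZl [dotv (a - zs) G]dotvC [dotv b G]dotvC; lra.
Qed.

(* With w = z1 - zs + (s+2)/2 z2 one has w' = - c (s+2)/2 gradL (z1 + betabar s z2):
   the damping 2 dbar s = 3/(s+2) cancels exactly. *)
Lemma is_derive_nesterov_lyapunov {z1 z2 : R -> 'rV[R]_n} {x : R} : 0 < x ->
  is_derive x 1 z1 (z2 x) -> is_derive x 1 z2 (nesterov_field x (z1 x) (z2 x)) ->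
  is_derive x (1 : R) (fun s => nesterov_lyapunov s (z1 s) (z2 s))
    (c * (x + 2) / 2 * nesterov_dissipation x (z1 x) (z2 x)).
Proof.
move=> x0 d1 d2; have du := is_derive_subr_cst zs d1.
have -> : (fun s => nesterov_lyapunov s (z1 s) (z2 s)) = fun s =>
    c / 4 * ((s + 2) * (s + 2)) * (L (z1 s) - L zs) + (sqn (z1 s - zs)
    + (s + 2) * dotv (z1 s - zs) (z2 s) + (s + 2) * (s + 2) / 4 * sqn (z2 s)) / 2.
  apply/funext => s; rewrite /nesterov_lyapunov; move: (z1 s - zs) (z2 s) => u v.
  by rewrite dotvDl !dotvDr !dotvZl !dotvZr (dotvC v u); field.
have dp := is_deriveD (is_derive_id x 1) (is_derive_cst (2 : R) x 1).
have dp2 := is_deriveM dp dp.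
have dL := is_deriveB (is_derive_comp_gradient hgrad d1) (is_derive_cst (L zs) x 1).
have dV1 := is_deriveM (is_deriveM (is_derive_cst (c / 4) x 1) dp2) dL.
have dV2 := is_deriveM (is_deriveD (is_deriveD (is_derive_dotv du du)
  (is_deriveM dp (is_derive_dotv du d2)))
  (is_deriveM (is_deriveM dp2 (is_derive_cst (4^-1 : R) x 1)) (is_derive_dotv d2 d2)))
  (is_derive_cst (2^-1 : R) x 1).
apply: is_derive_eq (is_deriveD dV1 dV2) _.
rewrite !fctE /nesterov_dissipation [dotv (nesterov_field _ _ _) _]dotvC /nesterov_field.
move: (gradL (z1 x + betabar x *: z2 x)) => G; move: (z1 x - zs) (z2 x) => u v.
rewrite !dotvBr !dotvZr dotvDl dotvZl (dotvC v u) (dotvC v G) /GRing.scale /= /dbar.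
by field; rewrite gt_eqF // addr_gt0.
Qed.

Lemma nesterov_lyapunov_nonincreasing {T : \bar R} {z1 z2 : R -> 'rV[R]_n} {tau : R -> R} :
  is_sol gradL zeta M T z1 z2 tau -> tau 0 = 0 ->
  forall t, 1 <= t -> (t%:E < T)%E ->
  nesterov_lyapunov t (z1 t) (z2 t) <= nesterov_lyapunov 1 (z1 1) (z2 1).
Proof.
move=> sol tau0 t; rewrite le_eqVlt => /predU1P[<- //|t1] tT.
pose V s := nesterov_lyapunov s (z1 s) (z2 s).
pose dV x := c * (x + 2) / 2 * nesterov_dissipation x (z1 x) (z2 x).
have V_derive x : 0 < x -> x <= t -> is_derive x 1 V (dV x).
  move=> x0 xt; have [d1 d2] := sol_is_derive sol tau0 x x0 (le_lt_trans (lee_tofin xt) tT).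
  exact: is_derive_nesterov_lyapunov.
have V_cvg : V s @[s --> 1^'+] --> V 1.
  apply: cvg_at_right_filter; have [dV1 _] := V_derive 1 ltr01 (ltW t1).
  exact/differentiable_continuous/derivable1_diffP.
have V_derive' x : 1 < x <= t -> is_derive x 1 V (dV x).
  by move=> /andP[x1 xt]; apply: V_derive => //; exact: lt_trans x1.
have dV_le0 x : 1 < x < t -> dV x <= 0.
  move=> /andP[x1 _]; apply: mulr_ge0_le0; last exact: nesterov_dissipation_le0.
  by rewrite divr_ge0 // mulr_ge0 ?(ltW c_gt0) //; lra.
exact: is_derive_le0_le t1 V_cvg V_derive' dV_le0.
Qed.

Lemma nesterov_rate (B : R) : exists C : R,
  forall (T : \bar R) (z1 z2 : R -> 'rV[R]_n) (tau : R -> R),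
  is_sol gradL zeta M T z1 z2 tau -> tau 0 = 0 ->
  sqn (z1 0 - zs) + sqn (z2 0) <= B ->
  forall t, 1 <= t -> (t%:E < T)%E -> c * (L (z1 t) - L zs) * (t + 2) ^+ 2 <= C.
Proof.
set C1 := 9 / 4 * c * M ^+ 2 + 9 / 8 * c + 9 / 4.
set C2 := 9 / 4 * c * sqn (gradL zs).
exists (4 * (C1 * ((B + grow_shift) * expR grow_rate) + C2)).
move=> T z1 z2 tau sol tau0 init t t1 tT.
have C1_ge0 : 0 <= C1.
  have c0 := ltW c_gt0; have := mulr_ge0 c0 (sqr_ge0 M); rewrite /C1; lra.
have at_one : sqn (z1 1 - zs) + sqn (z2 1) <= (B + grow_shift) * expR grow_rate.
  have := nesterov_energy_at_one sol tau0 (le_lt_trans (lee_tofin t1) tT).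
  have : sqn (z1 0 - zs) + sqn (z2 0) + grow_shift <= B + grow_shift by rewrite lerD2r.
  move=> /(ler_wpM2r (expR_ge0 grow_rate)); have := grow_shift_ge0; lra.
have := ler_wpM2l C1_ge0 at_one.
have := nesterov_lyapunov_one_le (z1 1) (z2 1); rewrite -/C1 -/C2.
have := nesterov_lyapunov_nonincreasing sol tau0 t t1 tT.
have := nesterov_lyapunov_ge t (z1 t) (z2 t).
lra.
Qed.

End nesterov_flow.

Theorem proposition5p6 (R : realType) (n : nat)
  (L : 'rV[R]_n -> R) (gradL : 'rV[R]_n -> 'rV[R]_n) (zs : 'rV[R]_n) (M zeta : R)
  (hgrad : is_gradient L gradL) (hC1 : continuous gradL)
  (hconv : convex_fun L) (hmin : unique_minimizer L zs)
  (hM : 0 < M) (hlip : lipschitz_euclid gradL M) (hzeta : 0 < zeta) :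
  forall (eps : R), 0 < eps ->
  forall (K : set ('rV[R]_n * 'rV[R]_n)), compact K ->
  exists tstar : R, 0 < tstar /\
    forall (T : \bar R) (z1 z2 : R -> 'rV[R]_n) (tau : R -> R),
      is_maximal_sol gradL zeta M T z1 z2 tau ->
      K (z1 0, z2 0) -> tau 0 = 0 ->
      forall t : R, tstar <= t -> (t%:E < T)%E ->
        zeta ^+ 2 / M * (L (z1 t) - L zs) <= eps.
Proof.
move=> eps eps0 K cK.
have init_cont : continuous (fun p : 'rV[R]_n * 'rV[R]_n => sqn (p.1 - zs) + sqn p.2).
  move=> p; apply: cvgD; last by apply: cvg_dotv; exact: cvg_snd.
  by apply: cvg_dotv; apply: cvgB (cvg_cst _); exact: cvg_fst.
have [B init] := compact_continuous_ub cK init_cont.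
have [C rate] := nesterov_rate zs hgrad hconv hM hlip hzeta B.
have C_eps_ge0 : 0 <= `|C| / eps by rewrite divr_ge0 // ltW.
exists (1 + `|C| / eps); split; first lra.
move=> T z1 z2 tau [sol _] Kz tau0 t tstar_t tT.
have t1 : 1 <= t by apply: le_trans tstar_t; rewrite lerDl.
have C_le : `|C| <= (t - 1) * eps by rewrite -ler_pdivrMr //; lra.
have := rate T z1 z2 tau sol tau0 (init _ Kz) t t1 tT.
have := ler_norm C; nra.
Qed.
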